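(* Let $n\ge 8$ be an even integer and let $W_{3,n}$ be the $3$-regular Kn\''odel graph. Then $W_{3,n}$ is $\gamma$-stable if and only if $n\not\equiv 4 \pmod 8$.
   Context: For an even integer $n\ge 2$ and $1\le\Delta\le\lfloor\log_2 n\rfloor$, the Kn\''odel graph $W_{\Delta,n}$ is the $\Delta$-regular bipartite graph on the $n$ vertices $(i,j)$, $i\in\{1,2\}$, $0\le j\le n/2-1$, in which for every $j$ the vertex $(1,j)$ is adjacent to the vertices $(2,(j+2^k-1)\bmod (n/2))$ for $k=0,1,\dots,\Delta-1$ (and there are no other edges); in particular $W_{3,n}$ is defined for even $n\ge 8$. A set $D$ of vertices of a graph $G$ is dominating if every vertex not in $D$ is adjacent to a vertex of $D$; $\gamma(G)$ is the minimum size of a dominating set. A graph $G$ is $\gamma$-stable (domination vertex stable) if $\gamma(G-u)=\gamma(G)$ for every vertex $u$ of $G$, where $G-u$ is the graph obtained by deleting $u$. *)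

From mathcomp Require Import all_boot.
Set Implicit Arguments. Unset Strict Implicit. Unset Printing Implicit Defensive.

(* Graphs: a vertex set V : {set T} on a finType T with adjacency relation e.
   The graph induced on V has vertices V and edges e restricted to V. *)

Definition dominating (T : finType) (e : rel T) (V D : {set T}) : bool :=
  (D \subset V) && [forall v in V :\: D, [exists d in D, e v d]].

(* Domination number: minimum size of a dominating set (V itself dominates). *)
Definition gamma_on (T : finType) (e : rel T) (V : {set T}) : nat :=
  \big[minn/#|V|]_(D : {set T} | dominating e V D) #|D|.

Definition gamma_stable (T : finType) (e : rel T) (V : {set T}) : Prop :=
  forall u, u \in V -> gamma_on e (V :\ u) = gamma_on e V.

(* Knodel graph W_{Delta,n}: vertices (i,j), i in {1,2} (encoded as false/true),
   j in 'I_(n/2).  (1,j) ~ (2,(j + 2^k - 1) mod (n/2)) for k = 0..Delta-1. *)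
Definition knodel_vertex (n : nat) := (bool * 'I_(n./2))%type.

Definition knodel_half_adj (n Delta : nat) (a b : nat) : bool :=
  (* a = index of side-1 vertex, b = index of side-2 vertex *)
  [exists k : 'I_Delta, b == (a + 2 ^ k - 1) %% n./2].

Arguments knodel_half_adj : clear implicits.
Definition knodel_adj (n Delta : nat) : rel (knodel_vertex n) :=
  fun x y =>
    match x.1, y.1 with
    | false, true => knodel_half_adj n Delta x.2 y.2
    | true, false => knodel_half_adj n Delta y.2 x.2
    | _, _ => false
    end.
Arguments knodel_adj : clear implicits.

From mathcomp Require Import all_boot zify.
Set Implicit Arguments. Unset Strict Implicit. Unset Printing Implicit Defensive.

(* Write m = n/2. Every closed neighbourhood of W_{3,n} has 4 vertices, so a
   dominating set of W_{3,n} (2m vertices) or of W_{3,n} - u (2m - 1 vertices)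
   has at least ceil((2m-1)/4) = ceil(2m/4) elements. If m is not 2 mod 4, the
   set of the (1,4t) and (2,4t+2), repaired near the end of the cycle, attains
   this bound; the rotations j |-> j + s are automorphisms that move it off any
   given vertex u, so gamma(W - u) = gamma(W). If m = 2 mod 4, the set of size
   m/2 built the same way dominates W - (1,m-3), while a dominating set of W of
   size m/2 would be a perfect code; in a perfect code (1,j+4) forces (1,j), so
   going around the cycle (1,i) forces (1,i+2), which shares the neighbour
   (2,i+3) with it. *)

Section Domination.
Variables (T : finType) (e : rel T).
Implicit Types (V D : {set T}).

Definition cnbhd (d : T) : {set T} := [set v | (v == d) || e v d].

Definition dominators (D : {set T}) (v : T) : {set T} := [set d in D | v \in cnbhd d].

Definition efficient (D : {set T}) : Prop :=
  forall v, {in D &, forall d1 d2, v \in cnbhd d1 -> v \in cnbhd d2 -> d1 = d2}.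

Lemma mem_cnbhd_self d : d \in cnbhd d.
Proof. by rewrite inE eqxx. Qed.

Lemma mem_cnbhdC (e_sym : symmetric e) x y : (x \in cnbhd y) = (y \in cnbhd x).
Proof. by rewrite !inE eq_sym e_sym. Qed.

Lemma dominatingP V D :
  reflect (D \subset V /\ {in V, forall v, exists2 d, d \in D & v \in cnbhd d})
          (dominating e V D).
Proof.
apply: (iffP andP) => -[sDV domD]; split=> //.
  move=> v vV; case vD: (v \in D); first by exists v; rewrite ?mem_cnbhd_self.
  have /(forall_inP domD)/exists_inP[d dD evd] : v \in V :\: D by rewrite inE vD.
  by exists d; rewrite // inE evd orbT.
apply/forall_inP => v /setDP[vV vD]; have [d dD] := domD v vV.
rewrite inE => /orP[/eqP vd | evd]; first by rewrite vd dD in vD.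
by apply/exists_inP; exists d.
Qed.

Lemma dominating_self V : dominating e V V.
Proof. by apply/dominatingP; split=> // v vV; exists v; rewrite ?mem_cnbhd_self. Qed.

Lemma dominating_setD1 V D u :
  dominating e V D -> u \notin D -> dominating e (V :\ u) D.
Proof.
move=> /dominatingP[sDV domD] uD; apply/dominatingP; split.
  by apply/subsetP => d dD; rewrite !inE (subsetP sDV) // andbT; apply: contraNneq uD => <-.
by move=> v /setD1P[_ vV]; apply: domD.
Qed.

Lemma dominating_imset f D : injective f -> {mono f : x y / e x y} ->
  dominating e setT D -> dominating e setT (f @: D).
Proof.
move=> f_inj f_mono /dominatingP[_ domD]; apply/dominatingP; split=> [|v _].
  exact: subsetT.
have [g fK gK] := injF_bij f_inj; have -> : v = f (g v) by rewrite gK.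
have [d dD gv_d] := domD (g v) (in_setT _); exists (f d); first exact: imset_f.
by move: gv_d; rewrite !inE (inj_eq f_inj) f_mono.
Qed.

Lemma efficient_notin D d1 d2 v : efficient D -> d1 \in D -> d1 != d2 ->
  v \in cnbhd d1 -> v \in cnbhd d2 -> d2 \notin D.
Proof.
move=> effD d1D d1_neq_d2 vd1 vd2; apply: contra d1_neq_d2 => d2D.
by apply/eqP; apply: effD vd1 vd2.
Qed.

Lemma gamma_on_min V D : dominating e V D -> gamma_on e V <= #|D|.
Proof.
move=> domD; rewrite /gamma_on; have: D \in index_enum {set T} by rewrite mem_index_enum.
elim: (index_enum _) => // D' s IHs; rewrite inE big_cons => /orP[/eqP<- | /IHs].
  by rewrite domD geq_minl.
by case: ifP => // _; apply: leq_trans (geq_minr _ _).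
Qed.

Lemma gamma_on_lb V c :
  (forall D, dominating e V D -> c <= #|D|) -> c <= gamma_on e V.
Proof.
move=> lbD; rewrite /gamma_on; elim/big_ind: _ => // [|x y].
  exact/lbD/dominating_self.
by rewrite leq_min => -> ->.
Qed.

Lemma sum_card_dominators k V D : (forall d, #|cnbhd d| <= k) ->
  \sum_(v in V) #|dominators D v| <= k * #|D|.
Proof.
move=> cnbhd_le; rewrite mulnC -sum_nat_const.
have -> : \sum_(v in V) #|dominators D v| = \sum_(d in D) #|cnbhd d :&: V|.
  rewrite (eq_bigr (fun v => \sum_(d in D) (v \in cnbhd d))); last first.
    move=> v _; rewrite -sum1_card big_mkcond [RHS]big_mkcond /=.
    by apply: eq_bigr => d _; rewrite inE; case: (d \in D).
  rewrite exchange_big /=; apply: eq_bigr => d _.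
  rewrite -sum1_card [RHS]big_mkcond [LHS]big_mkcond /=; apply: eq_bigr => v _.
  by rewrite in_setI andbC; case: (v \in V).
apply: leq_sum => d _; apply: leq_trans (cnbhd_le d); exact/subset_leq_card/subsetIl.
Qed.

Lemma card_dominators_gt0 V D v :
  dominating e V D -> v \in V -> 0 < #|dominators D v|.
Proof.
by case/dominatingP=> _ /[apply] -[d dD vd]; apply/card_gt0P; exists d; rewrite inE dD.
Qed.

Lemma card_dominating_le k V D : (forall d, #|cnbhd d| <= k) ->
  dominating e V D -> #|V| <= k * #|D|.
Proof.
move=> cnbhd_le domD; apply: leq_trans (sum_card_dominators V D cnbhd_le).
by rewrite -sum1_card leq_sum // => v; apply: card_dominators_gt0.
Qed.

(* Equality in the double count behind [card_dominating_le] forces every vertex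
   to have exactly one dominator. *)
Lemma efficient_of_card k D : (forall d, #|cnbhd d| <= k) ->
  dominating e setT D -> k * #|D| <= #|T| -> efficient D.
Proof.
move=> cnbhd_le domD le_kD v d1 d2 d1D d2D vd1 vd2.
have one_dominator : forall w, #|dominators D w| = 1.
  have [le_sum eq_sum] := leqif_sum (P := fun w => w \in setT)
    (fun w w_in => leqif_eq (card_dominators_gt0 domD w_in)).
  rewrite sum1_card in le_sum eq_sum.
  have: #|[set: T]| == \sum_(w in setT) #|dominators D w|.
    by rewrite eqn_leq le_sum (leq_trans (sum_card_dominators _ _ cnbhd_le)) ?cardsT.
  by rewrite eq_sum => /forall_inP one w; rewrite -(eqP (one w (in_setT w))).
apply/eqP/negPn/negP => d1_neq_d2.
have: #|[set d1; d2]| <= #|dominators D v|.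
  by apply/subset_leq_card/subsetP => d /set2P[]->; rewrite inE ?d1D ?vd1 ?d2D ?vd2.
by rewrite cards2 d1_neq_d2 one_dominator.
Qed.

Lemma gamma_on_gt_of_not_efficient k c : (forall d, #|cnbhd d| <= k) ->
  (forall D, dominating e setT D -> ~ efficient D) -> k * c <= #|T| ->
  c < gamma_on e setT.
Proof.
move=> cnbhd_le not_efficient le_kc; apply: gamma_on_lb => D domD.
rewrite ltnNge; apply/negP => le_Dc; apply: (not_efficient D domD).
exact: efficient_of_card cnbhd_le domD (leq_trans (leq_mul (leqnn k) le_Dc) le_kc).
Qed.

Lemma gamma_stable_of_avoiding k c : (forall d, #|cnbhd d| <= k) ->
  k * c.-1 < #|T|.-1 ->
  (forall u, exists2 D, dominating e setT D & #|D| <= c /\ u \notin D) ->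
  gamma_stable e setT.
Proof.
move=> cnbhd_le lt_kc avoid u _; have [D domD [le_Dc uD]] := avoid u.
have gamma_ge V : #|T|.-1 <= #|V| -> c <= gamma_on e V.
  move=> le_V; apply: gamma_on_lb => D' domD'.
  apply: contraTT (leq_trans le_V (card_dominating_le cnbhd_le domD')).
  rewrite -!ltnNge => lt_D'c; apply: leq_ltn_trans lt_kc.
  by rewrite leq_mul2l -ltnS prednK ?lt_D'c ?orbT // (leq_ltn_trans _ lt_D'c).
have card_Tu : #|[set: T] :\ u| = #|T|.-1 by rewrite -cardsT (cardsD1 u [set: T]) in_setT.
apply/eqP; rewrite eqn_leq; apply/andP; split.
  apply: leq_trans (gamma_on_min (dominating_setD1 domD uD)) (leq_trans le_Dc _).
  by apply: gamma_ge; rewrite cardsT leq_pred.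
apply: leq_trans (gamma_on_min domD) (leq_trans le_Dc _).
by apply: gamma_ge; rewrite card_Tu.
Qed.

End Domination.

Lemma knodel_adj_sym n Delta : symmetric (knodel_adj n Delta).
Proof. by case=> [[] a] [[] b]. Qed.

Section Knodel3.
Variable n : nat.
Local Notation m := n./2.
Local Notation G := (knodel_adj n 3).
Hypothesis m_ge4 : 4 <= m.

Fact m_gt0 : 0 < m. Proof. exact: leq_trans m_ge4. Qed.

Definition idx (i : nat) : 'I_m := Ordinal (ltn_pmod i m_gt0).

Definition Av i : knodel_vertex n := (false, idx i).
Definition Bv i : knodel_vertex n := (true, idx i).

Lemma eq_Av i j : (Av i == Av j) = (i == j %[mod m]).
Proof. by rewrite /Av xpair_eqE eqxx. Qed.

Lemma eq_Bv i j : (Bv i == Bv j) = (i == j %[mod m]).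
Proof. by rewrite /Bv xpair_eqE eqxx. Qed.

Lemma Av_mod i j : i = j %[mod m] -> Av i = Av j.
Proof. by move=> eq_ij; apply/eqP; rewrite eq_Av eq_ij. Qed.

Lemma Bv_mod i j : i = j %[mod m] -> Bv i = Bv j.
Proof. by move=> eq_ij; apply/eqP; rewrite eq_Bv eq_ij. Qed.

Lemma knodel_vertex_ind (P : knodel_vertex n -> Prop) :
  (forall i, i < m -> P (Av i)) -> (forall i, i < m -> P (Bv i)) -> forall v, P v.
Proof.
have idxK (a : 'I_m) : idx a = a by apply: val_inj; rewrite /= modn_small.
by move=> PA PB [[] a]; [move: (PB a) | move: (PA a)]; rewrite /Av /Bv idxK; apply.
Qed.

Lemma adj_Av_Bv i j :
  G (Av i) (Bv j) = [|| j == i %[mod m], j == i + 1 %[mod m] | j == i + 3 %[mod m]].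
Proof.
have step k : (i %% m + 2 ^ k - 1) %% m = (i + (2 ^ k - 1)) %% m.
  by rewrite -addnBA ?expn_gt0 // modnDml.
rewrite /= /knodel_half_adj /=; apply/existsP/or3P => [[[k lt_k]] /= | ].
  rewrite step => /eqP->; case: k lt_k => [|[|[|//]]] _;
    by [constructor 1; rewrite addn0 | constructor 2 | constructor 3].
case=> /eqP eq_j; [exists ord0 | exists (inord 1) | exists (inord 2)];
  by rewrite /= ?inordK // step eq_j ?addn0.
Qed.

Lemma Bv_in_cnbhd_Av i j : [|| j == i, j == i + 1, j == i + 3 | j + m == i + 3] ->
  Bv j \in cnbhd G (Av i).
Proof.
rewrite inE knodel_adj_sym adj_Av_Bv => /or4P[] /eqP eq_j; apply/orP; right.
- by rewrite eq_j eqxx.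
- by rewrite eq_j eqxx orbT.
- by rewrite eq_j eqxx !orbT.
- by rewrite -(modnDr j) eq_j eqxx !orbT.
Qed.

Lemma Av_in_cnbhd_Bv i j : [|| j == i, j == i + 1, j == i + 3 | j + m == i + 3] ->
  Av i \in cnbhd G (Bv j).
Proof. by move=> /Bv_in_cnbhd_Av; rewrite (mem_cnbhdC (@knodel_adj_sym n 3)). Qed.

Lemma cnbhd_Av_sub i :
  cnbhd G (Av i) \subset [:: Av i; Bv i; Bv (i + 1); Bv (i + 3)].
Proof.
apply/subsetP; apply: knodel_vertex_ind => a _; rewrite !inE /=; first by rewrite orbF => ->.
by rewrite knodel_adj_sym adj_Av_Bv !eq_Bv.
Qed.

Lemma cnbhd_Bv_sub j :
  cnbhd G (Bv (j + 3)) \subset [:: Bv (j + 3); Av (j + 3); Av (j + 2); Av j].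
Proof.
apply/subsetP; apply: knodel_vertex_ind => a _; rewrite !inE /=; last by rewrite orbF => ->.
rewrite adj_Av_Bv !eq_Av -(eqn_modDr 1 a (j + 2)) -(eqn_modDr 3 a j) -addnA.
by case/or3P=> /eqP->; rewrite eqxx ?orbT.
Qed.

Lemma card_cnbhd_knodel d : #|cnbhd G d| <= 4.
Proof.
move: d; apply: knodel_vertex_ind => i _.
  exact: leq_trans (subset_leq_card (cnbhd_Av_sub i)) (card_size _).
rewrite -(Bv_mod (_ : i + m - 3 + 3 = i %[mod m])); last by rewrite subnK ?modnDr //; lia.
exact: leq_trans (subset_leq_card (cnbhd_Bv_sub _)) (card_size _).
Qed.

Definition shift (s : nat) (v : knodel_vertex n) : knodel_vertex n :=
  (v.1, idx (v.2 + s)).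

Lemma shift_Av s i : shift s (Av i) = Av (i + s).
Proof. by apply: Av_mod; rewrite modnDml. Qed.

Lemma shift_Bv s i : shift s (Bv i) = Bv (i + s).
Proof. by apply: Bv_mod; rewrite modnDml. Qed.

Lemma shift_inj s : injective (shift s).
Proof.
move=> [b1 a1] [b2 a2] [-> /eqP]; rewrite eqn_modDr !modn_small // => /eqP eq_a.
by congr pair; apply: val_inj.
Qed.

Lemma knodel_adj_shift s : {mono shift s : x y / G x y}.
Proof.
have shift_AB i j : G (shift s (Av i)) (shift s (Bv j)) = G (Av i) (Bv j).
  by rewrite shift_Av shift_Bv !adj_Av_Bv (addnAC i s 1) (addnAC i s 3) !eqn_modDr.
move=> x y; move: x y; apply: knodel_vertex_ind => i _; apply: knodel_vertex_ind => j _.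
- by rewrite !shift_Av.
- exact: shift_AB.
- by rewrite knodel_adj_sym shift_AB knodel_adj_sym.
- by rewrite !shift_Bv.
Qed.

Lemma knodel_dominating_avoiding D :
  dominating G setT D -> Av 1 \notin D -> Bv 1 \notin D ->
  forall u, exists2 D', dominating G setT D' & #|D'| <= #|D| /\ u \notin D'.
Proof.
move=> domD A1 B1; have wrap i : 1 + (i + m - 1) = i %[mod m].
  by rewrite addnC subnK ?modnDr //; lia.
have shift_dom s : dominating G setT (shift s @: D).
  by apply: dominating_imset domD; [apply: shift_inj | apply: knodel_adj_shift].
apply: knodel_vertex_ind => i _; exists (shift (i + m - 1) @: D) => //;
  split; rewrite ?leq_imset_card //.
  by rewrite -(Av_mod (wrap i)) -shift_Av mem_imset //; apply: shift_inj.
by rewrite -(Bv_mod (wrap i)) -shift_Bv mem_imset //; apply: shift_inj.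
Qed.

Definition pattern a b : {set knodel_vertex n} :=
  [set Av (4 * t) | t : 'I_a] :|: [set Bv (4 * t + 2) | t : 'I_b].

Lemma mem_pattern_Av a b t : t < a -> Av (4 * t) \in pattern a b.
Proof.
by move=> lt_ta; rewrite inE; apply/orP; left; apply/imsetP; exists (Ordinal lt_ta).
Qed.

Lemma mem_pattern_Bv a b t : t < b -> Bv (4 * t + 2) \in pattern a b.
Proof.
by move=> lt_tb; rewrite inE; apply/orP; right; apply/imsetP; exists (Ordinal lt_tb).
Qed.

Lemma card_pattern a b : #|pattern a b| <= a + b.
Proof.
apply: leq_trans (leq_card_setU _ _) (leq_add _ _);
  by apply: leq_trans (leq_imset_card _ _) _; rewrite card_ord.
Qed.

Lemma Av_notin_pattern a b i : i < m -> 4 * a <= m + 3 -> i %% 4 != 0 ->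
  Av i \notin pattern a b.
Proof.
move=> lt_im le_am i_mod4; rewrite inE negb_or; apply/andP; split; apply/imsetP=> -[t _] //.
move/eqP; rewrite eq_Av !modn_small //; have := ltn_ord t; lia.
Qed.

Lemma Bv_notin_pattern a b j : j < m -> 4 * b <= m + 1 -> j %% 4 != 2 ->
  Bv j \notin pattern a b.
Proof.
move=> lt_jm le_bm j_mod4; rewrite inE negb_or; apply/andP; split; apply/imsetP=> -[t _] //.
move/eqP; rewrite eq_Bv !modn_small //; have := ltn_ord t; lia.
Qed.

Lemma knodel_vertex_ind4 (P : knodel_vertex n -> Prop) :
  (forall q r, r < 4 -> 4 * q + r < m -> P (Av (4 * q + r))) ->
  (forall q r, r < 4 -> 4 * q + r < m -> P (Bv (4 * q + r))) -> forall v, P v.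
Proof.
move=> PA PB; apply: knodel_vertex_ind => i lt_im;
  rewrite (divn_eq i 4) mulnC; [apply: PA | apply: PB]; rewrite ?ltn_pmod //;
  by rewrite mulnC -divn_eq.
Qed.

Lemma pattern_dominating a : m <= 4 * a <= m + 1 -> dominating G setT (pattern a a).
Proof.
move=> /andP[le_m_4a le_4a_m1]; apply/dominatingP; split=> [|v _]; first exact: subsetT.
move: v; apply: knodel_vertex_ind4 => q [|[|[|[|//]]]] _ lt_m.
- by exists (Av (4 * q)); rewrite ?addn0 ?mem_cnbhd_self // mem_pattern_Av //; lia.
- by exists (Bv (4 * q + 2)); [apply: mem_pattern_Bv | apply: Av_in_cnbhd_Bv]; lia.
- by exists (Bv (4 * q + 2)); [apply: mem_pattern_Bv | apply: Av_in_cnbhd_Bv]; lia.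
- have [lt_qa | le_aq] := ltnP q.+1 a.
    by exists (Bv (4 * q.+1 + 2)); [apply: mem_pattern_Bv | apply: Av_in_cnbhd_Bv]; lia.
  by exists (Bv (4 * 0 + 2)); [apply: mem_pattern_Bv | apply: Av_in_cnbhd_Bv]; lia.
- by exists (Av (4 * q)); [apply: mem_pattern_Av | apply: Bv_in_cnbhd_Av]; lia.
- by exists (Av (4 * q)); [apply: mem_pattern_Av | apply: Bv_in_cnbhd_Av]; lia.
- by exists (Bv (4 * q + 2)); rewrite ?mem_cnbhd_self // mem_pattern_Bv //; lia.
- by exists (Av (4 * q)); [apply: mem_pattern_Av | apply: Bv_in_cnbhd_Av]; lia.
Qed.

Lemma pattern_setU1_dominating k : m = 4 * k + 1 ->
  dominating G setT (Av (4 * k - 1) |: pattern k k).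
Proof.
move=> m_eq; apply/dominatingP; split=> [|v _]; first exact: subsetT.
have mem_Av t : t < k -> Av (4 * t) \in Av (4 * k - 1) |: pattern k k.
  by move=> lt_tk; rewrite setU1r ?mem_pattern_Av.
have mem_Bv t : t < k -> Bv (4 * t + 2) \in Av (4 * k - 1) |: pattern k k.
  by move=> lt_tk; rewrite setU1r ?mem_pattern_Bv.
move: v; apply: knodel_vertex_ind4 => q [|[|[|[|//]]]] _ lt_m.
- have [lt_qk | le_kq] := ltnP q k.
    by exists (Av (4 * q)); rewrite ?addn0 ?mem_cnbhd_self ?mem_Av.
  by exists (Bv (4 * 0 + 2)); [apply: mem_Bv | apply: Av_in_cnbhd_Bv]; lia.
- by exists (Bv (4 * q + 2)); [apply: mem_Bv | apply: Av_in_cnbhd_Bv]; lia.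
- by exists (Bv (4 * q + 2)); [apply: mem_Bv | apply: Av_in_cnbhd_Bv]; lia.
- have [lt_qk | le_kq] := ltnP q.+1 k.
    by exists (Bv (4 * q.+1 + 2)); [apply: mem_Bv | apply: Av_in_cnbhd_Bv]; lia.
  exists (Av (4 * k - 1)); first exact: setU11.
  by rewrite (_ : 4 * q + 3 = 4 * k - 1) ?mem_cnbhd_self; lia.
- have [lt_qk | le_kq] := ltnP q k.
    by exists (Av (4 * q)); [apply: mem_Av | apply: Bv_in_cnbhd_Av]; lia.
  by exists (Av (4 * k - 1)); [apply: setU11 | apply: Bv_in_cnbhd_Av]; lia.
- by exists (Av (4 * q)); [apply: mem_Av | apply: Bv_in_cnbhd_Av]; lia.
- by exists (Bv (4 * q + 2)); rewrite ?mem_cnbhd_self // mem_Bv //; lia.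
- by exists (Av (4 * q)); [apply: mem_Av | apply: Bv_in_cnbhd_Av]; lia.
Qed.

Lemma pattern_dominating_setD1 k : m = 4 * k + 2 ->
  dominating G (setT :\ Av (4 * k - 1)) (pattern k.+1 k).
Proof.
move=> m_eq; apply/dominatingP; split.
  apply/subsetP => d d_in; rewrite !inE andbT; apply: contraTneq d_in => ->.
  by apply: Av_notin_pattern; lia.
move=> v; rewrite !inE andbT; move: v.
apply: knodel_vertex_ind4 => q [|[|[|[|//]]]] _ lt_m v_neq.
- by exists (Av (4 * q)); rewrite ?addn0 ?mem_cnbhd_self // mem_pattern_Av //; lia.
- have [lt_qk | le_kq] := ltnP q k.
    by exists (Bv (4 * q + 2)); [apply: mem_pattern_Bv | apply: Av_in_cnbhd_Bv]; lia.
  by exists (Bv (4 * 0 + 2)); [apply: mem_pattern_Bv | apply: Av_in_cnbhd_Bv]; lia.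
- by exists (Bv (4 * q + 2)); [apply: mem_pattern_Bv | apply: Av_in_cnbhd_Bv]; lia.
- have [lt_qk | le_kq] := ltnP q.+1 k.
    by exists (Bv (4 * q.+1 + 2)); [apply: mem_pattern_Bv | apply: Av_in_cnbhd_Bv]; lia.
  by move: v_neq; rewrite (_ : 4 * q + 3 = 4 * k - 1) ?eqxx //; lia.
- by exists (Av (4 * q)); [apply: mem_pattern_Av | apply: Bv_in_cnbhd_Av]; lia.
- by exists (Av (4 * q)); [apply: mem_pattern_Av | apply: Bv_in_cnbhd_Av]; lia.
- by exists (Bv (4 * q + 2)); rewrite ?mem_cnbhd_self // mem_pattern_Bv //; lia.
- by exists (Av (4 * q)); [apply: mem_pattern_Av | apply: Bv_in_cnbhd_Av]; lia.
Qed.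

Lemma knodel_dominating_small : m %% 4 != 2 ->
  exists2 D, dominating G setT D & [/\ #|D| <= (m + 1)./2, Av 1 \notin D & Bv 1 \notin D].
Proof.
have := ltn_pmod m (isT : 0 < 4); have := divn_eq m 4; set q := m %/ 4.
case: (m %% 4) => [|[|[|[|//]]]] // m_eq _ _.
- exists (pattern q q); first by apply: pattern_dominating; lia.
  split.
  + by apply: leq_trans (card_pattern _ _) _; lia.
  + by apply: Av_notin_pattern; lia.
  + by apply: Bv_notin_pattern; lia.
- exists (Av (4 * q - 1) |: pattern q q); first by apply: pattern_setU1_dominating; lia.
  split.
  + rewrite cardsU1; apply: leq_trans (leq_add (leq_b1 _) (card_pattern _ _)) _; lia.
  + rewrite in_setU1 negb_or Av_notin_pattern ?andbT; try lia.
    by rewrite eq_Av !modn_small; lia.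
  + by rewrite in_setU1 negb_or Bv_notin_pattern //; lia.
- exists (pattern q.+1 q.+1); first by apply: pattern_dominating; lia.
  split.
  + by apply: leq_trans (card_pattern _ _) _; lia.
  + by apply: Av_notin_pattern; lia.
  + by apply: Bv_notin_pattern; lia.
Qed.

Lemma Av_add_neq j c c' : c < m -> c' < m -> c != c' -> Av (j + c) != Av (j + c').
Proof. by move=> lt_cm lt_c'm; rewrite eq_Av eqn_modDl !modn_small. Qed.

Lemma Bv_add_neq j c c' : c < m -> c' < m -> c != c' -> Bv (j + c) != Bv (j + c').
Proof. by move=> lt_cm lt_c'm; rewrite eq_Bv eqn_modDl !modn_small. Qed.

Section EfficientDominatingSet.
Variable D : {set knodel_vertex n}.
Hypotheses (domD : dominating G setT D) (effD : efficient G D) (m_ge6 : 6 <= m).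

Lemma Bv_dominator j :
  exists2 d, d \in D & d \in [:: Bv (j + 3); Av (j + 3); Av (j + 2); Av j].
Proof.
have /dominatingP[_ /(_ (Bv (j + 3)) (in_setT _))[d dD jd]] := domD.
exists d => //; apply: (subsetP (cnbhd_Bv_sub j)).
by rewrite (mem_cnbhdC (@knodel_adj_sym n 3)).
Qed.

Lemma efficient_Av_add2 i : Av i \in D -> Av (i + 2) \notin D.
Proof.
move=> iD; apply: (efficient_notin effD iD (v := Bv (i + 3))).
- by rewrite -{1}(addn0 i) Av_add_neq //; lia.
- by apply: Bv_in_cnbhd_Av; lia.
- by apply: Bv_in_cnbhd_Av; lia.
Qed.

(* A_{j+4} excludes A_{j+1}, A_{j+2}, A_{j+3}, A_{j+5}, A_{j+6} from D; this forces
   B_{j+6} into D, which excludes B_{j+3}, whose only possible dominator left is A_j. *)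
Lemma efficient_Av_sub4 j : Av (j + 4) \in D -> Av j \in D.
Proof.
move=> j4D.
have notin_Av c x : c < m -> c != 4 -> Bv x \in cnbhd G (Av (j + 4)) ->
    Bv x \in cnbhd G (Av (j + c)) -> Av (j + c) \notin D.
  by move=> lt_cm c_neq4; apply: efficient_notin effD j4D _; apply: Av_add_neq; lia.
have j1D : Av (j + 1) \notin D by apply: (notin_Av _ (j + 4)); try apply: Bv_in_cnbhd_Av; lia.
have j2D : Av (j + 2) \notin D by apply: (notin_Av _ (j + 5)); try apply: Bv_in_cnbhd_Av; lia.
have j3D : Av (j + 3) \notin D by apply: (notin_Av _ (j + 4)); try apply: Bv_in_cnbhd_Av; lia.
have j5D : Av (j + 3 + 2) \notin D.
  by rewrite -addnA; apply: (notin_Av _ (j + 5)); try apply: Bv_in_cnbhd_Av; lia.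
have j6D : Av (j + 3 + 3) \notin D.
  by rewrite (_ : j + 3 + 3 = j + 4 + 2) ?efficient_Av_add2 //; lia.
have j6B : Bv (j + 3 + 3) \in D.
  have [d dD] := Bv_dominator (j + 3); rewrite !inE => /or4P[] /eqP d_eq;
    by rewrite d_eq ?(negbTE j6D) ?(negbTE j5D) ?(negbTE j3D) in dD.
have j3B : Bv (j + 3) \notin D.
  apply: (efficient_notin effD j6B (v := Av (j + 3))).
  - by rewrite -{2}(addn0 (j + 3)) Bv_add_neq //; lia.
  - by apply: Av_in_cnbhd_Bv; lia.
  - by apply: Av_in_cnbhd_Bv; lia.
have [d dD] := Bv_dominator j; rewrite !inE => /or4P[] /eqP d_eq;
  by rewrite d_eq ?(negbTE j3B) ?(negbTE j3D) ?(negbTE j2D) in dD.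
Qed.

Lemma efficient_Av_sub4n t j : Av (j + 4 * t) \in D -> Av j \in D.
Proof.
elim: t j => [|t IHt] j; first by rewrite muln0 addn0.
by rewrite mulnS addnA => /IHt; apply: efficient_Av_sub4.
Qed.

Lemma efficient_exists_Av : exists i, Av i \in D.
Proof.
have [/existsP[i iD] | /existsPn noA] := boolP [exists i : 'I_m, Av i \in D]; first by exists i.
have notin_Av i : Av i \notin D by rewrite -(Av_mod (modn_mod i m)); exact: noA (idx i).
have B3D j : Bv (j + 3) \in D.
  have [d dD] := Bv_dominator j; rewrite !inE => /or4P[] /eqP d_eq;
    by rewrite d_eq ?(negbTE (notin_Av _)) in dD.
have B3_neq_B4 : Bv (0 + 3) != Bv (1 + 3) by rewrite eq_Bv !modn_small //; lia.
have A3_B3 : Av 3 \in cnbhd G (Bv (0 + 3)) by apply: Av_in_cnbhd_Bv; lia.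
have A3_B4 : Av 3 \in cnbhd G (Bv (1 + 3)) by apply: Av_in_cnbhd_Bv; lia.
by move: (efficient_notin effD (B3D 0) B3_neq_B4 A3_B3 A3_B4); rewrite B3D.
Qed.

Lemma efficient_mod4 : m %% 4 != 2.
Proof.
apply/eqP => m_mod4; have [i iD] := efficient_exists_Av.
move/negP: (efficient_Av_add2 iD); apply; apply: (efficient_Av_sub4n (t := m %/ 4)).
by rewrite (Av_mod (_ : _ = i %[mod m])) // -(modnDr i m); congr (_ %% _); lia.
Qed.

End EfficientDominatingSet.

Lemma knodel_not_efficient D : m %% 4 = 2 -> dominating G setT D -> ~ efficient G D.
Proof.
move=> m_mod4 domD effD; have m_ge6 : 6 <= m by lia.
by move: (efficient_mod4 domD effD m_ge6); rewrite m_mod4.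
Qed.

End Knodel3.

Theorem corollary3p2 (n : nat) :
  8 <= n -> ~~ odd n ->
  (gamma_stable (knodel_adj n 3) [set: knodel_vertex n] <-> n %% 8 != 4).
Proof.
move=> n_ge8 n_even; have m_ge4 : 4 <= n./2 by lia.
have cnbhd_le := card_cnbhd_knodel m_ge4.
have card_V : #|[set: knodel_vertex n]| = 2 * n./2.
  by rewrite cardsT card_prod card_bool card_ord.
have -> : (n %% 8 != 4) = (n./2 %% 4 != 2) by lia.
split=> [stable | m_mod4]; last first.
  have [D domD [le_D A1 B1]] := knodel_dominating_small m_ge4 m_mod4.
  apply: (gamma_stable_of_avoiding cnbhd_le (c := (n./2 + 1)./2)); last first.
    move=> u; have [D' domD' [le_D' uD']] := knodel_dominating_avoiding domD A1 B1 u.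
    by exists D'; rewrite // (leq_trans le_D' le_D).
  by rewrite -cardsT card_V; lia.
apply/eqP => m_mod4; have [k m_eq] : exists k, n./2 = 4 * k + 2 by exists (n./2 %/ 4); lia.
have gamma_del := gamma_on_min (pattern_dominating_setD1 m_ge4 m_eq).
have gamma_T : 2 * k + 1 < gamma_on (knodel_adj n 3) [set: knodel_vertex n].
  apply: (gamma_on_gt_of_not_efficient cnbhd_le).
    by move=> D; apply: knodel_not_efficient.
  by rewrite -cardsT card_V m_eq; lia.
rewrite stable ?in_setT // in gamma_del.
by have := leq_trans gamma_T (leq_trans gamma_del (card_pattern m_ge4 k.+1 k)); lia.
Qed.
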